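(* Let $N\ge 1$, let $a_1,\dots,a_N>0$, $T_1,\dots,T_N\ge 0$ and $P_{\mathrm{tot}}>0$, let $c=\ln 2$, $\bar P_i=(2^{T_i}-1)/a_i$, and let $W_0$ be the principal branch of the Lambert W function. For $\lambda>0$ define $$P_i(\lambda)=\frac{2}{\lambda c^2}\,W_0\!\left(\frac{\lambda c^2}{2a_i}\,2^{T_i}\right)-\frac1{a_i},\qquad P_i^*(\lambda)=\min\{\bar P_i,\max\{0,P_i(\lambda)\}\},\qquad S(\lambda)=\sum_{i=1}^N P_i^*(\lambda).$$ Suppose $P_{\mathrm{tot}}<\sum_{i=1}^N\bar P_i$. Then there exists $\lambda^*>0$ with $S(\lambda^* )=P_{\mathrm{tot}}$, and for any such $\lambda^*$ the vector $(P_1^*(\lambda^* ),\dots,P_N^*(\lambda^* ))$ is an optimal solution of the problem of minimizing $\sum_{i=1}^N(\log_2(1+a_iP_i)-T_i)^2$ subject to $\sum_i P_i\le P_{\mathrm{tot}}$ and $P_i\ge 0$ for all $i$. Moreover, $P_i^*(\lambda)=0$ whenever $\lambda\ge 2a_iT_i/c$.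
   Context: For $z\ge 0$, $W_0(z)$ is the unique $w\ge 0$ with $we^w=z$. *)

From Stdlib Require Import Reals Lra ClassicalEpsilon.
Open Scope R_scope.

Fixpoint rsum (n : nat) (f : nat -> R) : R :=
  match n with
  | O => 0
  | S m => rsum m f + f m
  end.

(* Principal branch of Lambert W on z >= 0: the unique w >= 0 with w e^w = z.
   (Chosen by Hilbert epsilon; meaningful for z >= 0.) *)
Definition W0 (z : R) : R :=
  epsilon (inhabits 0) (fun w => 0 <= w /\ w * exp w = z).

Definition c : R := ln 2.

Definition log2 (x : R) : R := ln x / ln 2.

Definition Pbar (a T : R) : R := (Rpower 2 T - 1) / a.

Definition Plam (a T lam : R) : R :=
  2 / (lam * c ^ 2) * W0 (lam * c ^ 2 / (2 * a) * Rpower 2 T) - 1 / a.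

Definition Pstar (a T lam : R) : R :=
  Rmin (Pbar a T) (Rmax 0 (Plam a T lam)).

Definition Ssum (N : nat) (a T : nat -> R) (lam : R) : R :=
  rsum N (fun i => Pstar (a i) (T i) lam).

Definition objective (N : nat) (a T P : nat -> R) : R :=
  rsum N (fun i => (log2 (1 + a i * P i) - T i) ^ 2).

Definition feasible (N : nat) (Ptot : R) (P : nat -> R) : Prop :=
  rsum N P <= Ptot /\ (forall i, (i < N)%nat -> 0 <= P i).

Definition optimal (N : nat) (a T : nat -> R) (Ptot : R) (P : nat -> R) : Prop :=
  feasible N Ptot P /\
  (forall Q : nat -> R, feasible N Ptot Q -> objective N a T P <= objective N a T Q).

From Stdlib Require Import Reals Lra Psatz Ranalysis5 ClassicalEpsilon.
Open Scope R_scope.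

(* In the variable z = ln (1 + a p), the i-th term (log2 (1 + a p) - T)^2 + lam p of the
   Lagrangian is convex, with stationary point s given by 2 a (c T - s) = lam c^2 e^s.
   This equation is solved by s = c T - W0 (lam c^2 2^T / (2 a)), i.e. 1 + a P(lam) = e^s.
   Clipping z at 0 yields P*(lam), which thus minimises the Lagrangian over p >= 0 (the clip
   at Pbar never binds since s < c T), and weak duality makes it optimal once S(lam) = Ptot.
   Such a lam exists by the intermediate value theorem: S is continuous on (0, oo),
   S(lam) >= sum Pbar_i - O(lam), and S(lam) = 0 as soon as s <= 0 for every i, which happens
   exactly when lam >= 2 a_i T_i / c. *)

Lemma c_pos : 0 < c.
Proof. unfold c; rewrite <- ln_1; apply ln_increasing; lra. Qed.

Lemma Rpower_2_exp x : Rpower 2 x = exp (c * x).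
Proof. unfold Rpower, c; now rewrite Rmult_comm. Qed.

Lemma xexp_increasing x y : 0 <= x -> x < y -> x * exp x < y * exp y.
Proof.
  intros hx hxy.
  assert (exp x < exp y) by (apply exp_increasing; lra).
  pose proof (exp_pos x); nra.
Qed.

Lemma continuity_xexp x : continuity_pt (fun w => w * exp w) x.
Proof.
  apply continuity_pt_mult.
  - apply derivable_continuous_pt, derivable_pt_id.
  - apply derivable_continuous_pt, derivable_pt_exp.
Qed.

Lemma W0_spec z : 0 <= z -> 0 <= W0 z /\ W0 z * exp (W0 z) = z.
Proof.
  intros hz; unfold W0; apply epsilon_spec.
  destruct (IVT_cor (fun w => w * exp w - z) 0 z) as [w [hw hwz]].
  - intros x; apply continuity_pt_minus; [apply continuity_xexp|].
    apply continuity_pt_const; intros u v; reflexivity.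
  - exact hz.
  - rewrite exp_0; pose proof (exp_ineq1_le z); nra.
  - exists w; split; lra.
Qed.

Lemma W0_pos z : 0 < z -> 0 < W0 z.
Proof.
  intros hz; destruct (W0_spec z) as [[hw | hw] hwe]; [lra | exact hw |].
  rewrite <- hw, Rmult_0_l in hwe; lra.
Qed.

Lemma continuity_pt_W0 z : 0 < z -> continuity_pt W0 z.
Proof.
  intros hz.
  apply (continuity_pt_recip_interv (fun w => w * exp w) W0 0 (z + 1)); try lra.
  - intros x y hx hxy _; apply xexp_increasing; lra.
  - intros x hx _; rewrite Rmult_0_l in hx; apply W0_spec; exact hx.
  - intros x hx hx'; rewrite Rmult_0_l in hx.
    destruct (W0_spec x hx) as [hw hwe]; split; [exact hw |].
    destruct (Rle_dec (W0 x) (z + 1)) as [h | h]; [exact h |].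
    assert ((z + 1) * exp (z + 1) < W0 x * exp (W0 x)) by (apply xexp_increasing; lra).
    lra.
  - intros x _; apply continuity_xexp.
  - rewrite Rmult_0_l; pose proof (exp_ineq1_le (z + 1)); nra.
Qed.

(* With s = c T - W0(k 2^T) and k = lam c^2 / (2 a), the defining identity of W0 reads
   e^s = W0(k 2^T) / k. *)
Lemma Plam_stationary a T lam : 0 < a -> 0 < lam ->
  exists s, 1 + a * Plam a T lam = exp s /\ s < c * T /\
            2 * a * (c * T - s) = lam * c ^ 2 * exp s.
Proof.
  intros ha hlam; pose proof c_pos as hc; assert (hc2 : 0 < c ^ 2) by (apply pow_lt, hc).
  set (k := lam * c ^ 2 / (2 * a)).
  assert (hk : 0 < k) by (unfold k; apply Rdiv_lt_0_compat; nra).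
  set (z := k * Rpower 2 T).
  assert (hz : 0 < z) by (unfold z; rewrite Rpower_2_exp; pose proof (exp_pos (c * T)); nra).
  pose proof (W0_pos z hz) as hw; destruct (W0_spec z) as [_ hwe]; [lra |].
  set (w := W0 z) in *.
  assert (hs : exp (c * T - w) = w / k).
  { unfold Rminus; rewrite exp_plus, exp_Ropp, <- Rpower_2_exp.
    pose proof (exp_pos w).
    replace (w / k) with (w * exp w / (k * exp w)) by (field; lra).
    rewrite hwe; unfold z; field; lra. }
  exists (c * T - w); rewrite hs; split; [| split; [lra |]].
  - unfold Plam; fold k z w; unfold k; field; repeat split; lra.
  - unfold k; field; repeat split; lra.
Qed.

Lemma exp_ge_tangent x y : exp x * (1 + (y - x)) <= exp y.
Proof.
  replace (exp y) with (exp x * exp (y - x)) by (rewrite <- exp_plus; f_equal; ring).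
  pose proof (exp_pos x); pose proof (exp_ineq1_le (y - x)); nra.
Qed.

Lemma exp_ge_1 x : 0 <= x -> 1 <= exp x.
Proof. intros hx; pose proof (exp_ineq1_le x); lra. Qed.

Lemma nonneg_of_exp_ge_1 x : 1 <= exp x -> 0 <= x.
Proof.
  intros hx; apply Rnot_lt_le; intros hneg.
  pose proof (exp_increasing _ _ hneg); rewrite exp_0 in *; lra.
Qed.

Section Coordinate.

Variables a T lam : R.
Hypotheses (ha : 0 < a) (hT : 0 <= T) (hlam : 0 < lam).

Lemma Pbar_nonneg : 0 <= Pbar a T.
Proof.
  unfold Pbar; rewrite Rpower_2_exp.
  pose proof (exp_ge_1 (c * T)) as h; pose proof c_pos.
  apply Rmult_le_pos; [nra | left; apply Rinv_0_lt_compat, ha].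
Qed.

Lemma Plam_lt_Pbar : Plam a T lam < Pbar a T.
Proof.
  destruct (Plam_stationary a T lam ha hlam) as [s [hPs [hsT hs]]].
  pose proof (exp_increasing _ _ hsT).
  unfold Pbar; rewrite Rpower_2_exp.
  apply (Rmult_lt_reg_l a); [exact ha |].
  replace (a * ((exp (c * T) - 1) / a)) with (exp (c * T) - 1) by (field; lra).
  lra.
Qed.

Lemma Pstar_eq_Rmax : Pstar a T lam = Rmax 0 (Plam a T lam).
Proof.
  apply Rmin_right, Rmax_lub; [apply Pbar_nonneg | left; apply Plam_lt_Pbar].
Qed.

Lemma Pstar_nonneg : 0 <= Pstar a T lam.
Proof. rewrite Pstar_eq_Rmax; apply Rmax_l. Qed.

Lemma Pstar_eq0 : 2 * a * T / c <= lam -> Pstar a T lam = 0.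
Proof.
  intros hle; pose proof c_pos as hc.
  destruct (Plam_stationary a T lam ha hlam) as [s [hPs [hsT hs]]].
  assert (hcl : 2 * a * T <= lam * c).
  { apply (Rmult_le_compat_r c) in hle; [| lra].
    replace (2 * a * T / c * c) with (2 * a * T) in hle by (field; lra); exact hle. }
  assert (hs0 : s <= 0).
  { apply Rnot_lt_le; intros hspos.
    pose proof (exp_increasing _ _ hspos) as he; rewrite exp_0 in he.
    assert (lam * c ^ 2 < lam * c ^ 2 * exp s) by (assert (0 < lam * c ^ 2) by nra; nra).
    nra. }
  rewrite Pstar_eq_Rmax; apply Rmax_left.
  assert (exp s <= 1) by (rewrite <- exp_0; destruct hs0 as [h | ->];
                          [left; apply exp_increasing, h | lra]).
  nra.
Qed.

(* From e^s >= e^{cT} (1 - (cT - s)) and 2 a (cT - s) = lam c^2 e^s <= lam c^2 e^{cT}. *)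
Lemma Pstar_lower_bound :
  Pbar a T - lam * (c ^ 2 * exp (c * T) ^ 2 / (2 * a ^ 2)) <= Pstar a T lam.
Proof.
  pose proof c_pos as hc.
  destruct (Plam_stationary a T lam ha hlam) as [s [hPs [hsT hs]]].
  set (E := exp (c * T)) in *.
  assert (hE : 0 < E) by apply exp_pos.
  assert (hsE : exp s <= E) by (left; apply exp_increasing, hsT).
  assert (htan : E * (1 + (s - c * T)) <= exp s) by apply exp_ge_tangent.
  assert (hgap : 2 * a * (c * T - s) <= lam * c ^ 2 * E)
    by (rewrite hs; apply Rmult_le_compat_l; [nra | exact hsE]).
  rewrite Pstar_eq_Rmax; apply (Rle_trans _ (Plam a T lam)); [| apply Rmax_r].
  unfold Pbar; rewrite Rpower_2_exp; fold E.
  apply (Rmult_le_reg_l (2 * a ^ 2)); [nra |].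
  replace (2 * a ^ 2 * ((E - 1) / a - lam * (c ^ 2 * E ^ 2 / (2 * a ^ 2))))
    with (2 * a * (E - 1) - lam * c ^ 2 * E ^ 2) by (field; lra).
  replace (2 * a ^ 2 * Plam a T lam) with (2 * a * (exp s - 1)) by nra.
  nra.
Qed.

Definition rate_cost (z : R) : R := (z / c - T) ^ 2 + lam * ((exp z - 1) / a).

Definition rate_cost_slope (z : R) : R := 2 * (z / c - T) / c + lam * exp z / a.

Lemma rate_cost_tangent y z : rate_cost z + rate_cost_slope z * (y - z) <= rate_cost y.
Proof.
  pose proof c_pos as hc; unfold rate_cost, rate_cost_slope.
  assert (hsq : (z / c - T) ^ 2 + 2 * (z / c - T) / c * (y - z) <= (y / c - T) ^ 2).
  { pose proof (pow2_ge_0 ((y - z) / c)).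
    replace ((y / c - T) ^ 2)
      with ((z / c - T) ^ 2 + 2 * (z / c - T) / c * (y - z) + ((y - z) / c) ^ 2)
      by (field; lra).
    lra. }
  assert (hexp : lam * ((exp z - 1) / a) + lam * exp z / a * (y - z)
                 <= lam * ((exp y - 1) / a)).
  { replace (lam * ((exp z - 1) / a) + lam * exp z / a * (y - z))
      with (lam / a * (exp z * (1 + (y - z)) - 1)) by (field; lra).
    replace (lam * ((exp y - 1) / a)) with (lam / a * (exp y - 1)) by (field; lra).
    apply Rmult_le_compat_l; [apply Rlt_le, Rdiv_lt_0_compat; assumption |].
    pose proof (exp_ge_tangent z y); lra. }
  lra.
Qed.

(* KKT condition in the variable z = ln (1 + a p) >= 0. *)
Lemma Pstar_KKT : exists z, 0 <= z /\ 1 + a * Pstar a T lam = exp z /\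
  forall y, 0 <= y -> 0 <= rate_cost_slope z * (y - z).
Proof.
  pose proof c_pos as hc.
  destruct (Plam_stationary a T lam ha hlam) as [s [hPs [hsT hs]]].
  destruct (Rle_lt_dec 0 s) as [hs0 | hs0].
  - exists s; split; [exact hs0 | split].
    + rewrite Pstar_eq_Rmax, Rmax_right; [exact hPs |].
      pose proof (exp_ge_1 s hs0); nra.
    + intros y _.
      replace (rate_cost_slope s) with 0; [lra |].
      unfold rate_cost_slope.
      replace (lam * exp s / a) with (2 * a * (c * T - s) / (a * c ^ 2))
        by (rewrite hs; field; lra).
      field; lra.
  - exists 0; split; [lra | split].
    + assert (exp s < 1) by (rewrite <- exp_0; apply exp_increasing, hs0).
      rewrite Pstar_eq_Rmax, Rmax_left, exp_0; nra.
    + intros y hy; apply Rmult_le_pos; [| lra].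
      assert (exp s < 1) by (rewrite <- exp_0; apply exp_increasing, hs0).
      assert (hslope : a * c ^ 2 * rate_cost_slope 0 = lam * c ^ 2 - 2 * a * c * T)
        by (unfold rate_cost_slope; rewrite exp_0; field; lra).
      assert (hlc : 0 < lam * c ^ 2) by (apply Rmult_lt_0_compat; [exact hlam | apply pow_lt, hc]).
      apply (Rmult_le_reg_l (a * c ^ 2)); [apply Rmult_lt_0_compat; [exact ha | apply pow_lt, hc] |].
      rewrite Rmult_0_r, hslope; nra.
Qed.

Lemma rate_cost_log2 q : 0 <= q ->
  (log2 (1 + a * q) - T) ^ 2 + lam * q = rate_cost (ln (1 + a * q)).
Proof.
  intros hq; unfold rate_cost, log2; fold c.
  rewrite exp_ln by nra; f_equal; field; lra.
Qed.

Lemma Pstar_minimizes_Lagrangian q : 0 <= q ->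
  (log2 (1 + a * Pstar a T lam) - T) ^ 2 + lam * Pstar a T lam
  <= (log2 (1 + a * q) - T) ^ 2 + lam * q.
Proof.
  intros hq.
  destruct Pstar_KKT as [z [hz [hPz hslope]]].
  rewrite !rate_cost_log2 by (assumption || apply Pstar_nonneg).
  rewrite hPz, ln_exp.
  set (y := ln (1 + a * q)).
  assert (hy : 0 <= y) by (apply nonneg_of_exp_ge_1; unfold y; rewrite exp_ln; nra).
  pose proof (rate_cost_tangent y z); pose proof (hslope y hy); lra.
Qed.

End Coordinate.

Lemma continuity_pt_Rmax f g x : continuity_pt f x -> continuity_pt g x ->
  continuity_pt (fun l => Rmax (f l) (g l)) x.
Proof.
  intros hf hg.
  apply (continuity_pt_locally_ext (fun l => (f l + g l + Rabs (f l - g l)) / 2) _ 1);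
    [lra | intros y _; unfold Rmax, Rabs; destruct Rle_dec, Rcase_abs; lra |].
  reg.
Qed.

Lemma continuity_pt_Rmin f g x : continuity_pt f x -> continuity_pt g x ->
  continuity_pt (fun l => Rmin (f l) (g l)) x.
Proof.
  intros hf hg.
  apply (continuity_pt_locally_ext (fun l => (f l + g l - Rabs (f l - g l)) / 2) _ 1);
    [lra | intros y _; unfold Rmin, Rabs; destruct Rle_dec, Rcase_abs; lra |].
  reg.
Qed.

Lemma continuity_pt_Plam a T x : 0 < a -> 0 < x -> continuity_pt (Plam a T) x.
Proof.
  intros ha hx; pose proof c_pos as hc; unfold Plam.
  assert (hxc : 0 < x * c ^ 2) by (apply Rmult_lt_0_compat; [exact hx | apply pow_lt, hc]).
  reg; [| lra].
  apply continuity_pt_W0; rewrite Rpower_2_exp.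
  apply Rmult_lt_0_compat; [| apply exp_pos].
  apply Rmult_lt_0_compat; [exact hxc | apply Rinv_0_lt_compat; lra].
Qed.

Lemma continuity_pt_Pstar a T x : 0 < a -> 0 < x -> continuity_pt (Pstar a T) x.
Proof.
  intros ha hx; apply continuity_pt_Rmin; [reg |].
  apply continuity_pt_Rmax; [reg | apply continuity_pt_Plam; assumption].
Qed.

Lemma rsum_le N f g : (forall i, (i < N)%nat -> f i <= g i) -> rsum N f <= rsum N g.
Proof.
  induction N as [| N IH]; simpl; intros hfg; [lra |].
  apply Rplus_le_compat; [apply IH; intros i hi |]; apply hfg; lia.
Qed.

Lemma rsum_eq0 N f : (forall i, (i < N)%nat -> f i = 0) -> rsum N f = 0.
Proof.
  induction N as [| N IH]; simpl; intros hf; [reflexivity |].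
  rewrite IH, hf; [ring | lia | intros; apply hf; lia].
Qed.

Lemma rsum_nonneg N f : (forall i, (i < N)%nat -> 0 <= f i) -> 0 <= rsum N f.
Proof.
  intros hf; rewrite <- (rsum_eq0 N (fun _ => 0)) by reflexivity.
  apply rsum_le, hf.
Qed.

Lemma rsum_ge_term N f j : (forall i, (i < N)%nat -> 0 <= f i) -> (j < N)%nat ->
  f j <= rsum N f.
Proof.
  induction N as [| N IH]; simpl; intros hf hj; [lia |].
  assert (hsum : 0 <= rsum N f) by (apply rsum_nonneg; intros; apply hf; lia).
  destruct (Nat.eq_dec j N) as [-> | hjN]; [lra |].
  assert (f j <= rsum N f) by (apply IH; [intros; apply hf |]; lia).
  assert (0 <= f N) by (apply hf; lia).
  lra.
Qed.

Lemma rsum_plus N f g : rsum N (fun i => f i + g i) = rsum N f + rsum N g.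
Proof. induction N as [| N IH]; simpl; [ring | rewrite IH; ring]. Qed.

Lemma rsum_mult_l N k f : rsum N (fun i => k * f i) = k * rsum N f.
Proof. induction N as [| N IH]; simpl; [ring | rewrite IH; ring]. Qed.

Lemma continuity_pt_rsum N F x :
  (forall i, (i < N)%nat -> continuity_pt (F i) x) ->
  continuity_pt (fun l => rsum N (fun i => F i l)) x.
Proof.
  induction N as [| N IH]; simpl; intros hF; [reg |].
  apply (continuity_pt_plus (fun l => rsum N (fun i => F i l)) (F N));
    [apply IH; intros |]; apply hF; lia.
Qed.

Section Allocation.

Variables (N : nat) (a T : nat -> R).
Hypotheses (ha : forall i, (i < N)%nat -> 0 < a i)
           (hT : forall i, (i < N)%nat -> 0 <= T i).

Lemma threshold_nonneg i : (i < N)%nat -> 0 <= 2 * a i * T i / c.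
Proof.
  intros hi; pose proof c_pos; pose proof (ha i hi); pose proof (hT i hi).
  apply Rmult_le_pos; [nra | left; apply Rinv_0_lt_compat; lra].
Qed.

Lemma Ssum_lower_bound lam : 0 < lam ->
  rsum N (fun i => Pbar (a i) (T i))
  - lam * rsum N (fun i => c ^ 2 * exp (c * T i) ^ 2 / (2 * a i ^ 2))
  <= Ssum N a T lam.
Proof.
  intros hlam.
  apply (Rle_trans _ (rsum N (fun i =>
    Pbar (a i) (T i) + - lam * (c ^ 2 * exp (c * T i) ^ 2 / (2 * a i ^ 2)))));
    [rewrite rsum_plus, rsum_mult_l; lra |].
  apply rsum_le; intros i hi.
  pose proof (Pstar_lower_bound (a i) (T i) lam (ha i hi) (hT i hi) hlam); lra.
Qed.

Lemma Ssum_eq0 lam : 0 < lam -> rsum N (fun i => 2 * a i * T i / c) <= lam ->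
  Ssum N a T lam = 0.
Proof.
  intros hlam hle; apply rsum_eq0; intros i hi.
  apply Pstar_eq0; [apply ha | apply hT | |]; try assumption.
  apply (Rle_trans _ (rsum N (fun i => 2 * a i * T i / c))); [| exact hle].
  apply (rsum_ge_term N (fun i => 2 * a i * T i / c)); [exact threshold_nonneg | exact hi].
Qed.

Lemma continuity_pt_Ssum lam : 0 < lam -> continuity_pt (Ssum N a T) lam.
Proof.
  intros hlam; apply (continuity_pt_rsum N (fun i => Pstar (a i) (T i))).
  intros i hi; apply continuity_pt_Pstar; [apply ha | ]; assumption.
Qed.

Lemma Ssum_attains Ptot : 0 < Ptot -> Ptot < rsum N (fun i => Pbar (a i) (T i)) ->
  exists lam, 0 < lam /\ Ssum N a T lam = Ptot.
Proof.
  intros hP hlt.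
  set (K := rsum N (fun i => c ^ 2 * exp (c * T i) ^ 2 / (2 * a i ^ 2))).
  assert (hK : 0 <= K).
  { apply rsum_nonneg; intros i hi; pose proof (ha i hi).
    apply Rmult_le_pos; [apply Rmult_le_pos; apply pow2_ge_0 |].
    left; apply Rinv_0_lt_compat; nra. }
  set (lam1 := (rsum N (fun i => Pbar (a i) (T i)) - Ptot) / (K + 1)).
  assert (hlam1 : 0 < lam1) by (apply Rdiv_lt_0_compat; lra).
  assert (hS1 : Ptot < Ssum N a T lam1).
  { eapply Rlt_le_trans; [| apply Ssum_lower_bound, hlam1]; fold K.
    assert (lam1 * (K + 1) = rsum N (fun i => Pbar (a i) (T i)) - Ptot)
      by (unfold lam1; field; lra).
    nra. }
  set (lam2 := lam1 + 1 + rsum N (fun i => 2 * a i * T i / c)).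
  assert (hB : 0 <= rsum N (fun i => 2 * a i * T i / c))
    by (apply rsum_nonneg, threshold_nonneg).
  assert (hS2 : Ssum N a T lam2 = 0) by (apply Ssum_eq0; unfold lam2; lra).
  destruct (IVT_interv (fun l => Ptot - Ssum N a T l) lam1 lam2) as [lam [hlam hS]].
  - intros l hl; apply continuity_pt_minus; [reg | apply continuity_pt_Ssum; lra].
  - unfold lam2; lra.
  - lra.
  - rewrite hS2; lra.
  - exists lam; split; lra.
Qed.

Lemma Pstar_optimal Ptot lam : 0 < lam -> Ssum N a T lam = Ptot ->
  optimal N a T Ptot (fun i => Pstar (a i) (T i) lam).
Proof.
  intros hlam hS; split; [split |].
  - unfold Ssum in hS; lra.
  - intros i hi; apply Pstar_nonneg; [apply ha | apply hT |]; assumption.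
  - intros Q [hQ hQnn].
    assert (hL := rsum_le N
      (fun i => (log2 (1 + a i * Pstar (a i) (T i) lam) - T i) ^ 2 + lam * Pstar (a i) (T i) lam)
      (fun i => (log2 (1 + a i * Q i) - T i) ^ 2 + lam * Q i)
      (fun i hi => Pstar_minimizes_Lagrangian (a i) (T i) lam (ha i hi) (hT i hi) hlam
                     (Q i) (hQnn i hi))).
    rewrite !rsum_plus, !rsum_mult_l in hL; unfold Ssum in hS; rewrite hS in hL.
    unfold objective; nra.
Qed.

End Allocation.

Theorem mainTheorem8 (N : nat) (a T : nat -> R) (Ptot : R)
  (hN : (1 <= N)%nat)
  (ha : forall i, (i < N)%nat -> 0 < a i)
  (hT : forall i, (i < N)%nat -> 0 <= T i)
  (hP : 0 < Ptot)
  (hlt : Ptot < rsum N (fun i => Pbar (a i) (T i))) :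
  (exists lam, 0 < lam /\ Ssum N a T lam = Ptot) /\
  (forall lam, 0 < lam -> Ssum N a T lam = Ptot ->
     optimal N a T Ptot (fun i => Pstar (a i) (T i) lam)) /\
  (forall lam i, 0 < lam -> (i < N)%nat -> 2 * a i * T i / c <= lam ->
     Pstar (a i) (T i) lam = 0).
Proof.
  split; [| split].
  - apply Ssum_attains; assumption.
  - intros lam hlam hS; apply Pstar_optimal; assumption.
  - intros lam i hlam hi hle; apply Pstar_eq0; auto.
Qed.
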